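(* Let $f:M\to\mathbb{R}^3$ be an immersion with eq\''uiaffine transversal vector field $\xi$ and positive definite induced bilinear form $h$, let $(u,v)$ be isothermal coordinates centered at an umbilical point $(0,0)$ of order $\ge k$, with $\lambda_0=b_{11}(0,0)=b_{22}(0,0)\neq0$, and set $q_0=f(0,0)+\lambda_0^{-1}\xi(0,0)$. Let $\nu$ be the co-normal, $p=\nu\cdot(f-q_0)$, $\mathcal{P}=(p_{uu}-p_{vv},2p_{uv})$ and $\mathcal{B}=(b_{11}-b_{22},2b_{12})$. Then $$J_k\mathcal{P}=\lambda_0^{-1}\delta_0\,J_k\mathcal{B},$$ where $J_k$ denotes the $k$-jet at $(0,0)$ and $\delta_0=\delta(0,0)$ with $\delta=[f_u,f_v,\xi][\nu,\nu_u,\nu_v]/\rho$.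
   Context: $D$ is the flat connection of $\mathbb{R}^3$; $h$ and the shape operator $B$ are defined by $D_Xf_*Y=f_*(\nabla_XY)+h(X,Y)\xi$, $D_X\xi=-f_*(BX)+\tau(X)\xi$, eq\''uiaffine meaning $\tau=0$. Isothermal coordinates: $h(\partial_u,\partial_u)=h(\partial_v,\partial_v)=\rho$, $h(\partial_u,\partial_v)=0$. The matrix of $B$ is given by $\xi_u=-b_{11}f_u-b_{21}f_v$, $\xi_v=-b_{12}f_u-b_{22}f_v$ (with $b_{12}=b_{21}$). Umbilical: $B$ a multiple of the identity; order $\ge k$ means the $(k-1)$-jet of $\mathcal{B}$ at $(0,0)$ vanishes. The co-normal $\nu$ satisfies $\nu\cdot f_u=\nu\cdot f_v=0$, $\nu\cdot\xi=1$; $[a,b,c]$ is the determinant of three vectors. *)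

From Stdlib Require Import Reals List.
From Coquelicot Require Import Coquelicot.
Open Scope R_scope.

Definition sfun := R -> R -> R.

Definition du (g : sfun) : sfun := fun u v => Derive (fun t => g t v) u.
Definition dv (g : sfun) : sfun := fun u v => Derive (fun t => g u t) v.

(** Iterated partial derivative along a word (true = d/du, false = d/dv),
    the head of the list being applied last. *)
Fixpoint dword (w : list bool) (g : sfun) : sfun :=
  match w with
  | nil => g
  | b :: w' => (if b then du else dv) (dword w' g)
  end.

Definition Dpart (i j : nat) (g : sfun) : sfun :=
  Nat.iter i du (Nat.iter j dv g).

Definition coord_disc (r u v : R) : Prop := u ^ 2 + v ^ 2 < r ^ 2.

Definition smooth_on (r : R) (g : sfun) : Prop :=
  forall (w : list bool) (u v : R), coord_disc r u v ->
    continuity_2d_pt (dword w g) u v /\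
    ex_derive (fun t => dword w g t v) u /\
    ex_derive (fun t => dword w g u t) v.

Definition vec := (R * R * R)%type.
Definition vx (a : vec) : R := fst (fst a).
Definition vy (a : vec) : R := snd (fst a).
Definition vz (a : vec) : R := snd a.
Definition vadd (a b : vec) : vec := (vx a + vx b, vy a + vy b, vz a + vz b).
Definition vscal (c : R) (a : vec) : vec := (c * vx a, c * vy a, c * vz a).
Definition dot (a b : vec) : R := vx a * vx b + vy a * vy b + vz a * vz b.
(** [a,b,c] = det of the three vectors (= a . (b x c)). *)
Definition det3 (a b c : vec) : R :=
  vx a * (vy b * vz c - vz b * vy c)
  - vy a * (vx b * vz c - vz b * vx c)
  + vz a * (vx b * vy c - vy b * vx c).

Definition vfun := R -> R -> vec.
Definition compx (F : vfun) : sfun := fun u v => vx (F u v).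
Definition compy (F : vfun) : sfun := fun u v => vy (F u v).
Definition compz (F : vfun) : sfun := fun u v => vz (F u v).
Definition vdu (F : vfun) : vfun :=
  fun u v => (du (compx F) u v, du (compy F) u v, du (compz F) u v).
Definition vdv (F : vfun) : vfun :=
  fun u v => (dv (compx F) u v, dv (compy F) u v, dv (compz F) u v).

Definition vsmooth_on (r : R) (F : vfun) : Prop :=
  smooth_on r (compx F) /\ smooth_on r (compy F) /\ smooth_on r (compz F).

Definition jet_eq_scaled (k : nat) (P1 P2 : sfun) (c : R) (B1 B2 : sfun) : Prop :=
  forall i j : nat, (i + j <= k)%nat ->
    Dpart i j P1 0 0 = c * Dpart i j B1 0 0 /\
    Dpart i j P2 0 0 = c * Dpart i j B2 0 0.

(** The l-jet of (B1,B2) at (0,0) vanishes, for l = k-1 (vacuous if k = 0):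
    all partial derivatives of order < k vanish at (0,0). *)
Definition jet_vanishes_below (k : nat) (B1 B2 : sfun) : Prop :=
  forall i j : nat, (i + j < k)%nat ->
    Dpart i j B1 0 0 = 0 /\ Dpart i j B2 0 0 = 0.

(* Write f - q0 = alpha f_u + beta f_v + gamma xi in the frame (f_u, f_v, xi).
   Since nu is dual to xi, p = gamma; differentiating the decomposition with the
   Gauss and Weingarten formulas gives a first-order linear system for
   (alpha, beta, gamma) whose inhomogeneous terms are 1 and the entries of B.
   The choice of q0 makes alpha and beta vanish and gamma = -1/lambda0 at the
   origin, and an induction on the order, comparing the mixed partials of alpha
   and beta, shows that alpha and beta vanish to order k + 1 when B vanishes to
   order k. Through the same system, P = -gamma rho B + alpha X + beta Y, so the
   k-jet of P is rho0/lambda0 times that of B. Finally, Cauchy-Binet applied to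
   the dot products of (nu, nu_u, nu_v) with (f_u, f_v, xi) gives delta0 = rho0. *)

From Stdlib Require Import Reals Lra Lia List.
From Coquelicot Require Import Coquelicot.
Open Scope R_scope.
Import ListNotations.


(** * Smooth functions on the coordinate disc *)

Definition eq_on_disc (r : R) (F G : sfun) : Prop :=
  forall u v, coord_disc r u v -> F u v = G u v.

Lemma coord_disc_origin r : 0 < r -> coord_disc r 0 0.
Proof. unfold coord_disc; intros; nra. Qed.

Lemma coord_disc_locally_2d r u v : coord_disc r u v -> locally_2d (coord_disc r) u v.
Proof.
  unfold coord_disc; intros H.
  assert (Hc : continuity_2d_pt (fun s t => s * s + t * t) u v).
  { apply continuity_2d_pt_plus; apply continuity_2d_pt_mult;
      auto using continuity_2d_pt_id1, continuity_2d_pt_id2. }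
  assert (He : 0 < r ^ 2 - (u * u + v * v)) by lra.
  eapply locally_2d_impl; [| apply (Hc (mkposreal _ He))].
  apply locally_2d_forall; simpl; intros s t Hst.
  apply Rabs_lt_between in Hst; lra.
Qed.

Lemma eq_on_disc_locally_2d r F G u v :
  eq_on_disc r F G -> coord_disc r u v -> locally_2d (fun s t => F s t = G s t) u v.
Proof.
  intros H Hd; eapply locally_2d_impl; [| apply coord_disc_locally_2d, Hd].
  apply locally_2d_forall; auto.
Qed.

Definition partial (b : bool) : sfun -> sfun := if b then du else dv.

Lemma dword_cons b w F : dword (b :: w) F = partial b (dword w F).
Proof. now destruct b. Qed.

Lemma dword_app w w' F : dword w (dword w' F) = dword (w ++ w') F.
Proof. induction w as [|b w IH]; simpl; now rewrite ?IH. Qed.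

Lemma dword_snoc w b F : dword (w ++ [b]) F = dword w (partial b F).
Proof. rewrite <- dword_app; now destruct b. Qed.

Lemma partial_ext r b F G :
  eq_on_disc r F G -> eq_on_disc r (partial b F) (partial b G).
Proof.
  intros H u v Hd; pose proof (eq_on_disc_locally_2d r F G u v H Hd) as L.
  destruct b; apply Derive_ext_loc.
  - exact (locally_2d_1d_const_y _ u v L).
  - exact (locally_2d_1d_const_x _ u v L).
Qed.

Lemma dword_ext r w F G : eq_on_disc r F G -> eq_on_disc r (dword w F) (dword w G).
Proof.
  induction w as [|b w IH]; intros H; [exact H|].
  rewrite !dword_cons; apply partial_ext, IH, H.
Qed.

Definition regular_at (F : sfun) (u v : R) : Prop :=
  continuity_2d_pt F u v /\ ex_derive (fun t => F t v) u /\ ex_derive (fun t => F u t) v.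

Lemma regular_at_ext r F G u v :
  eq_on_disc r F G -> coord_disc r u v -> regular_at F u v -> regular_at G u v.
Proof.
  intros H Hd (Hc & Hu & Hv); pose proof (eq_on_disc_locally_2d r F G u v H Hd) as L.
  split; [|split].
  - exact (continuity_2d_pt_ext_loc F G u v L Hc).
  - exact (ex_derive_ext_loc _ _ u (locally_2d_1d_const_y _ u v L) Hu).
  - exact (ex_derive_ext_loc _ _ v (locally_2d_1d_const_x _ u v L) Hv).
Qed.

Lemma regular_at_plus F G u v :
  regular_at F u v -> regular_at G u v -> regular_at (fun s t => F s t + G s t) u v.
Proof.
  intros (F0 & F1 & F2) (G0 & G1 & G2); split; [|split].
  - now apply continuity_2d_pt_plus.
  - now apply (ex_derive_plus (fun t => F t v) (fun t => G t v)).
  - now apply (ex_derive_plus (fun t => F u t) (fun t => G u t)).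
Qed.

Lemma regular_at_mult F G u v :
  regular_at F u v -> regular_at G u v -> regular_at (fun s t => F s t * G s t) u v.
Proof.
  intros (F0 & F1 & F2) (G0 & G1 & G2); split; [|split].
  - now apply continuity_2d_pt_mult.
  - now apply (ex_derive_mult (fun t => F t v) (fun t => G t v)).
  - now apply (ex_derive_mult (fun t => F u t) (fun t => G u t)).
Qed.

Lemma regular_at_inv F u v :
  regular_at F u v -> F u v <> 0 -> regular_at (fun s t => / F s t) u v.
Proof.
  intros (F0 & F1 & F2) Hn; split; [|split].
  - now apply continuity_2d_pt_inv.
  - now apply (ex_derive_inv (fun t => F t v)).
  - now apply (ex_derive_inv (fun t => F u t)).
Qed.

Lemma regular_at_const c u v : regular_at (fun _ _ => c) u v.
Proof.
  split; [|split]; auto using continuity_2d_pt_const, ex_derive_const.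
Qed.

Lemma partial_plus b F G u v : regular_at F u v -> regular_at G u v ->
  partial b (fun s t => F s t + G s t) u v = partial b F u v + partial b G u v.
Proof.
  intros (_ & F1 & F2) (_ & G1 & G2); destruct b.
  - now apply (Derive_plus (fun t => F t v) (fun t => G t v)).
  - now apply (Derive_plus (fun t => F u t) (fun t => G u t)).
Qed.

Lemma partial_mult b F G u v : regular_at F u v -> regular_at G u v ->
  partial b (fun s t => F s t * G s t) u v
  = partial b F u v * G u v + F u v * partial b G u v.
Proof.
  intros (_ & F1 & F2) (_ & G1 & G2); destruct b.
  - now apply (Derive_mult (fun t => F t v) (fun t => G t v)).
  - now apply (Derive_mult (fun t => F u t) (fun t => G u t)).
Qed.

Lemma partial_inv b F u v : regular_at F u v -> F u v <> 0 ->
  partial b (fun s t => / F s t) u v = - partial b F u v * / F u v * / F u v.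
Proof.
  intros (_ & F1 & F2) Hn; destruct b; simpl; unfold du, dv.
  - rewrite (Derive_inv (fun t => F t v)); auto; field; auto.
  - rewrite (Derive_inv (fun t => F u t)); auto; field; auto.
Qed.

Lemma partial_const b c u v : partial b (fun _ _ => c) u v = 0.
Proof. destruct b; simpl; unfold du, dv; apply Derive_const. Qed.

Lemma partial_scal b c F u v :
  partial b (fun s t => c * F s t) u v = c * partial b F u v.
Proof. destruct b; simpl; unfold du, dv; apply Derive_scal. Qed.

Lemma partial_opp b F u v : partial b (fun s t => - F s t) u v = - partial b F u v.
Proof. destruct b; simpl; unfold du, dv; apply Derive_opp. Qed.

Lemma partial_ext_all b F G :
  (forall u v, F u v = G u v) -> forall u v, partial b F u v = partial b G u v.
Proof. intros H u v; destruct b; apply Derive_ext; auto. Qed.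

Definition smooth_upto (r : R) (n : nat) (F : sfun) : Prop :=
  forall w, (length w <= n)%nat ->
  forall u v, coord_disc r u v -> regular_at (dword w F) u v.

Lemma smooth_onE r F : smooth_on r F <-> forall n, smooth_upto r n F.
Proof.
  split; [intros H n w _; apply H|].
  intros H w; apply (H (length w) w (le_n _)).
Qed.

Lemma smooth_upto_0 r F :
  smooth_upto r 0 F <-> forall u v, coord_disc r u v -> regular_at F u v.
Proof.
  split; [intros H; apply (H [])|]; simpl; auto.
  intros H [|b w] Hw; simpl in *; [exact H | lia].
Qed.

Lemma smooth_upto_S r n F :
  smooth_upto r (S n) F <-> smooth_upto r 0 F /\ forall b, smooth_upto r n (partial b F).
Proof.
  split.
  - intros H; split; [intros w Hw; apply H; lia|].
    intros b w Hw; rewrite <- dword_snoc; apply H.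
    rewrite length_app; simpl; lia.
  - intros [H0 HS] w Hw.
    induction w as [|b w _] using rev_ind; [now apply H0|].
    rewrite dword_snoc; apply HS; rewrite length_app in Hw; simpl in Hw; lia.
Qed.

Lemma smooth_upto_ext r n F G :
  eq_on_disc r F G -> smooth_upto r n F -> smooth_upto r n G.
Proof.
  intros H HF w Hw u v Hd.
  apply (regular_at_ext r (dword w F)); auto using dword_ext.
Qed.

Lemma smooth_upto_le r m n F : (m <= n)%nat -> smooth_upto r n F -> smooth_upto r m F.
Proof. intros Hmn HF w Hw; apply HF; lia. Qed.

Lemma smooth_upto_const r n c : smooth_upto r n (fun _ _ => c).
Proof.
  revert c; induction n as [|n IH]; intros c.
  - apply smooth_upto_0; intros; apply regular_at_const.
  - apply smooth_upto_S; split; [apply smooth_upto_0; intros; apply regular_at_const|].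
    intros b; apply smooth_upto_ext with (fun _ _ => 0); auto.
    intros u v _; symmetry; apply partial_const.
Qed.

Lemma smooth_upto_plus r n : forall F G,
  smooth_upto r n F -> smooth_upto r n G -> smooth_upto r n (fun u v => F u v + G u v).
Proof.
  induction n as [|n IH]; intros F G HF HG.
  - rewrite smooth_upto_0 in *; intros u v Hd; apply regular_at_plus; auto.
  - rewrite smooth_upto_S in *; destruct HF as [HF0 HF], HG as [HG0 HG].
    rewrite smooth_upto_0 in *; split; [intros u v Hd; apply regular_at_plus; auto|].
    intros b; apply smooth_upto_ext with (fun u v => partial b F u v + partial b G u v); auto.
    intros u v Hd; symmetry; apply partial_plus; auto.
Qed.

Lemma smooth_upto_mult r n : forall F G,
  smooth_upto r n F -> smooth_upto r n G -> smooth_upto r n (fun u v => F u v * G u v).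
Proof.
  induction n as [|n IH]; intros F G HF HG.
  - rewrite smooth_upto_0 in *; intros u v Hd; apply regular_at_mult; auto.
  - assert (HFn := smooth_upto_le r n (S n) F (le_S _ _ (le_n n)) HF).
    assert (HGn := smooth_upto_le r n (S n) G (le_S _ _ (le_n n)) HG).
    rewrite smooth_upto_S in *; destruct HF as [HF0 HF], HG as [HG0 HG].
    rewrite smooth_upto_0 in *; split; [intros u v Hd; apply regular_at_mult; auto|].
    intros b; apply smooth_upto_ext
      with (fun u v => partial b F u v * G u v + F u v * partial b G u v).
    + intros u v Hd; symmetry; apply partial_mult; auto.
    + apply smooth_upto_plus; apply IH; auto.
Qed.

Lemma smooth_upto_opp r n F :
  smooth_upto r n F -> smooth_upto r n (fun u v => - F u v).
Proof.
  intros HF; apply smooth_upto_ext with (fun u v => -1 * F u v).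
  - intros u v _; ring.
  - apply smooth_upto_mult; auto using smooth_upto_const.
Qed.

Lemma smooth_upto_inv r n : forall F,
  (forall u v, coord_disc r u v -> F u v <> 0) ->
  smooth_upto r n F -> smooth_upto r n (fun u v => / F u v).
Proof.
  induction n as [|n IH]; intros F Hn HF.
  - rewrite smooth_upto_0 in *; intros u v Hd; apply regular_at_inv; auto.
  - assert (HI : smooth_upto r n (fun u v => / F u v))
      by (apply IH, (smooth_upto_le r n (S n)); auto).
    rewrite smooth_upto_S in *; destruct HF as [HF0 HF].
    rewrite smooth_upto_0 in *; split; [intros u v Hd; apply regular_at_inv; auto|].
    intros b; apply smooth_upto_ext
      with (fun u v => - partial b F u v * / F u v * / F u v).
    + intros u v Hd; symmetry; apply partial_inv; auto.
    + repeat apply smooth_upto_mult; auto using smooth_upto_opp.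
Qed.

Lemma smooth_on_ext r F G : eq_on_disc r F G -> smooth_on r F -> smooth_on r G.
Proof. rewrite !smooth_onE; intros H HF n; apply smooth_upto_ext with F; auto. Qed.

Lemma smooth_on_const r c : smooth_on r (fun _ _ => c).
Proof. apply smooth_onE; intros; apply smooth_upto_const. Qed.

Lemma smooth_on_plus r F G :
  smooth_on r F -> smooth_on r G -> smooth_on r (fun u v => F u v + G u v).
Proof. rewrite !smooth_onE; intros; apply smooth_upto_plus; auto. Qed.

Lemma smooth_on_mult r F G :
  smooth_on r F -> smooth_on r G -> smooth_on r (fun u v => F u v * G u v).
Proof. rewrite !smooth_onE; intros; apply smooth_upto_mult; auto. Qed.

Lemma smooth_on_opp r F : smooth_on r F -> smooth_on r (fun u v => - F u v).
Proof. rewrite !smooth_onE; intros; apply smooth_upto_opp; auto. Qed.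

Lemma smooth_on_minus r F G :
  smooth_on r F -> smooth_on r G -> smooth_on r (fun u v => F u v - G u v).
Proof. intros; apply (smooth_on_plus r F (fun u v => - G u v)); auto using smooth_on_opp. Qed.

Lemma smooth_on_inv r F : (forall u v, coord_disc r u v -> F u v <> 0) ->
  smooth_on r F -> smooth_on r (fun u v => / F u v).
Proof. rewrite !smooth_onE; intros; apply smooth_upto_inv; auto. Qed.

Lemma smooth_on_div r F G : (forall u v, coord_disc r u v -> G u v <> 0) ->
  smooth_on r F -> smooth_on r G -> smooth_on r (fun u v => F u v / G u v).
Proof.
  intros; apply (smooth_on_mult r F (fun u v => / G u v)); auto using smooth_on_inv.
Qed.

Lemma smooth_on_dword r w F : smooth_on r F -> smooth_on r (dword w F).
Proof. intros HF w'; rewrite dword_app; apply HF. Qed.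

Lemma smooth_on_partial r b F : smooth_on r F -> smooth_on r (partial b F).
Proof. apply (smooth_on_dword r [b]). Qed.

Lemma smooth_on_regular r F u v : smooth_on r F -> coord_disc r u v -> regular_at F u v.
Proof. intros HF; apply (HF []). Qed.

Lemma smooth_on_iter r b i F : smooth_on r F -> smooth_on r (Nat.iter i (partial b) F).
Proof. intros HF; induction i; simpl; auto using smooth_on_partial. Qed.

Lemma partial_plus_on r b F G : smooth_on r F -> smooth_on r G ->
  eq_on_disc r (partial b (fun u v => F u v + G u v))
               (fun u v => partial b F u v + partial b G u v).
Proof. intros HF HG u v Hd; apply partial_plus; eapply smooth_on_regular; eauto. Qed.

Lemma partial_mult_on r b F G : smooth_on r F -> smooth_on r G ->
  eq_on_disc r (partial b (fun u v => F u v * G u v))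
               (fun u v => partial b F u v * G u v + F u v * partial b G u v).
Proof. intros HF HG u v Hd; apply partial_mult; eapply smooth_on_regular; eauto. Qed.

Lemma partial_neg_mult r b F A B u v : smooth_on r A -> smooth_on r B ->
  eq_on_disc r F (fun u v => - (A u v * B u v)) -> coord_disc r u v ->
  partial b F u v = - (partial b A u v * B u v + A u v * partial b B u v).
Proof.
  intros HA HB HF Hd.
  rewrite (partial_ext r b _ _ HF u v Hd), partial_opp.
  now rewrite (partial_mult_on r b).
Qed.

Lemma partial_sub_const r b F c : smooth_on r F ->
  eq_on_disc r (partial b (fun u v => F u v - c)) (partial b F).
Proof.
  intros HF u v Hd.
  transitivity (partial b (fun u v => F u v + (fun _ _ => - c) u v) u v); [reflexivity|].
  rewrite (partial_plus_on r b); auto using smooth_on_const.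
  rewrite partial_const; ring.
Qed.

Lemma dword_plus r w F G : smooth_on r F -> smooth_on r G ->
  eq_on_disc r (dword w (fun u v => F u v + G u v))
               (fun u v => dword w F u v + dword w G u v).
Proof.
  intros HF HG; induction w as [|b w IH]; [intros u v _; reflexivity|].
  intros u v Hd; rewrite !dword_cons, (partial_ext r b _ _ IH u v Hd).
  apply partial_plus; eapply smooth_on_regular; eauto using smooth_on_dword.
Qed.

Lemma dword_scal w c F u v :
  dword w (fun s t => c * F s t) u v = c * dword w F u v.
Proof.
  revert u v; induction w as [|b w IH]; intros u v; [reflexivity|].
  rewrite !dword_cons, (partial_ext_all b _ _ IH); apply partial_scal.
Qed.

Lemma dword_opp w F u v : dword w (fun s t => - F s t) u v = - dword w F u v.
Proof.
  revert u v; induction w as [|b w IH]; intros u v; [reflexivity|].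
  rewrite !dword_cons, (partial_ext_all b _ _ IH); apply partial_opp.
Qed.

Lemma dword_const w c u v : w <> [] -> dword w (fun _ _ => c) u v = 0.
Proof.
  intros Hw; revert u v; induction w as [|b w IH]; intros u v; [easy|].
  rewrite dword_cons; destruct w as [|b' w'].
  - apply (partial_const b c).
  - rewrite (partial_ext_all b _ (fun _ _ => 0)); [apply partial_const|].
    intros; apply IH; discriminate.
Qed.

Lemma dword_minus r w F G : smooth_on r F -> smooth_on r G ->
  eq_on_disc r (dword w (fun u v => F u v - G u v))
               (fun u v => dword w F u v - dword w G u v).
Proof.
  intros HF HG u v Hd.
  rewrite (dword_plus r w F (fun s t => - G s t)); auto using smooth_on_opp.
  now rewrite dword_opp.
Qed.

Lemma dword_affine r w c g0 F : w <> [] -> smooth_on r F -> coord_disc r 0 0 ->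
  dword w (fun u v => c + g0 * F u v) 0 0 = g0 * dword w F 0 0.
Proof.
  intros Hw HF D0.
  rewrite (dword_plus r w (fun _ _ => c) (fun u v => g0 * F u v));
    auto using smooth_on_mult, smooth_on_const.
  rewrite dword_const, dword_scal; auto; ring.
Qed.

Lemma smooth_on_schwarz r F u v :
  smooth_on r F -> coord_disc r u v -> du (dv F) u v = dv (du F) u v.
Proof.
  intros HF Hd; apply Schwarz.
  - eapply locally_2d_impl; [| apply coord_disc_locally_2d, Hd].
    apply locally_2d_forall; intros s t Hst.
    destruct (smooth_on_regular r F s t HF Hst) as (_ & Fu & Fv).
    destruct (smooth_on_regular r (dv F) s t (smooth_on_partial r false F HF) Hst)
      as (_ & Fvu & _).
    destruct (smooth_on_regular r (du F) s t (smooth_on_partial r true F HF) Hst)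
      as (_ & _ & Fuv).
    auto.
  - exact (proj1 (smooth_on_regular r _ u v (smooth_on_dword r [true; false] F HF) Hd)).
  - exact (proj1 (smooth_on_regular r _ u v (smooth_on_dword r [false; true] F HF) Hd)).
Qed.

Lemma dword_schwarz r w F : smooth_on r F ->
  eq_on_disc r (dword (w ++ [false]) (du F)) (dword (w ++ [true]) (dv F)).
Proof.
  intros HF; rewrite !dword_snoc; apply dword_ext.
  intros u v Hd; symmetry; apply (smooth_on_schwarz r); auto.
Qed.

Lemma Dpart_dword i j F : Dpart i j F = dword (repeat true i ++ repeat false j) F.
Proof.
  unfold Dpart; induction i as [|i IH]; simpl; [|now rewrite IH].
  induction j as [|j IH]; simpl; now rewrite ?IH.
Qed.

Definition u_order (w : list bool) : nat := length (filter (fun b => b) w).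

Definition v_order (w : list bool) : nat := length (filter negb w).

Lemma length_orders w : length w = (u_order w + v_order w)%nat.
Proof.
  unfold u_order, v_order; induction w as [|[|] w IH]; simpl; lia.
Qed.

Lemma dv_iter_du r i F : smooth_on r F ->
  eq_on_disc r (dv (Nat.iter i du F)) (Nat.iter i du (dv F)).
Proof.
  intros HF; induction i as [|i IH]; [intros u v _; reflexivity|].
  intros u v Hd; simpl.
  rewrite <- (smooth_on_schwarz r (Nat.iter i du F)); auto.
  - exact (partial_ext r true _ _ IH u v Hd).
  - now apply (smooth_on_iter r true).
Qed.

Lemma dword_Dpart r w F : smooth_on r F ->
  eq_on_disc r (dword w F) (Dpart (u_order w) (v_order w) F).
Proof.
  intros HF; induction w as [|b w IH]; [intros u v _; reflexivity|].
  intros u v Hd; rewrite dword_cons, (partial_ext r b _ _ IH u v Hd).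
  destruct b; [reflexivity|].
  apply (dv_iter_du r (u_order w)); auto.
  now apply (smooth_on_iter r false).
Qed.

(** * Flatness at the origin *)

Definition flat_to (n : nat) (A : sfun) : Prop :=
  forall w, (length w < n)%nat -> dword w A 0 0 = 0.

Lemma flat_to_S n F : F 0 0 = 0 -> (forall b, flat_to n (partial b F)) -> flat_to (S n) F.
Proof.
  intros H0 HS w Hw; induction w as [|b w _] using rev_ind; [exact H0|].
  rewrite dword_snoc; apply HS; rewrite length_app in Hw; simpl in Hw; lia.
Qed.

Lemma flat_to_eq_on_disc r n F G : 0 < r ->
  eq_on_disc r F G -> flat_to n G -> flat_to n F.
Proof.
  intros Hr H HG w Hw; rewrite (dword_ext r w F G H); auto using coord_disc_origin.
Qed.

Lemma flat_to_partial n b A : flat_to n A -> flat_to (pred n) (partial b A).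
Proof.
  intros H w Hw; rewrite <- dword_snoc; apply H.
  rewrite length_app; simpl; lia.
Qed.

Lemma flat_to_mult r n1 n2 A B : 0 < r -> smooth_on r A -> smooth_on r B ->
  flat_to n1 A -> flat_to n2 B -> flat_to (n1 + n2) (fun u v => A u v * B u v).
Proof.
  intros Hr HA HB FA FB w; revert A B n1 n2 HA HB FA FB.
  induction w as [|b w IH] using rev_ind; intros A B n1 n2 HA HB FA FB Hw.
  - simpl in *; destruct n1 as [|n1].
    + specialize (FB [] Hw); simpl in FB; rewrite FB; ring.
    + specialize (FA [] (Nat.lt_0_succ n1)); simpl in FA; rewrite FA; ring.
  - rewrite length_app in Hw; simpl in Hw.
    pose proof (coord_disc_origin r Hr) as D0.
    rewrite dword_snoc, (dword_ext r w _ _ (partial_mult_on r b A B HA HB) 0 0 D0).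
    rewrite (dword_plus r); auto using smooth_on_mult, smooth_on_partial.
    rewrite (IH (partial b A) B (pred n1) n2), (IH A (partial b B) n1 (pred n2));
      auto using smooth_on_partial, flat_to_partial; [ring | lia | lia].
Qed.

Lemma flat_to_mult_l r n A B : 0 < r -> smooth_on r A -> smooth_on r B ->
  flat_to n A -> flat_to n (fun u v => A u v * B u v).
Proof.
  intros Hr HA HB FA; rewrite <- (Nat.add_0_r n).
  apply (flat_to_mult r); auto; intros w Hw; lia.
Qed.

Lemma dword_mult_flat r k G B w : 0 < r -> smooth_on r G -> smooth_on r B ->
  flat_to k B -> (length w <= k)%nat ->
  dword w (fun u v => G u v * B u v) 0 0 = G 0 0 * dword w B 0 0.
Proof.
  intros Hr HG HB FB Hw.
  assert (SG0 : smooth_on r (fun u v => G u v - G 0 0))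
    by auto using smooth_on_minus, smooth_on_const.
  assert (FG0 : flat_to 1 (fun u v => G u v - G 0 0)).
  { intros [|b w'] Hw'; simpl in *; [ring | lia]. }
  rewrite (dword_ext r w _ (fun u v => G 0 0 * B u v + (G u v - G 0 0) * B u v));
    [| intros u v _; ring | now apply coord_disc_origin].
  rewrite (dword_plus r); auto using smooth_on_mult, smooth_on_const, coord_disc_origin.
  rewrite dword_scal, (flat_to_mult r 1 k); auto; [ring | lia].
Qed.

Lemma dword_flat_combination r k G B a X c Y w : 0 < r ->
  smooth_on r G -> smooth_on r B -> smooth_on r a -> smooth_on r X ->
  smooth_on r c -> smooth_on r Y ->
  flat_to k B -> flat_to (S k) a -> flat_to (S k) c -> (length w <= k)%nat ->
  dword w (fun u v => G u v * B u v + a u v * X u v + c u v * Y u v) 0 0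
  = G 0 0 * dword w B 0 0.
Proof.
  intros Hr HG HB Ha HX Hc HY FB Fa Fc Hw.
  pose proof (coord_disc_origin r Hr) as D0.
  rewrite (dword_plus r); auto using smooth_on_plus, smooth_on_mult.
  rewrite (dword_plus r); auto using smooth_on_mult.
  rewrite (dword_mult_flat r k), (flat_to_mult_l r (S k) a), (flat_to_mult_l r (S k) c);
    auto; [ring | lia | lia].
Qed.

Lemma jet_vanishes_below_flat r k B1 B2 : 0 < r -> smooth_on r B1 -> smooth_on r B2 ->
  jet_vanishes_below k B1 B2 -> flat_to k B1 /\ flat_to k B2.
Proof.
  intros Hr H1 H2 J; split; intros w Hw;
    rewrite (dword_Dpart r); auto using coord_disc_origin;
    rewrite length_orders in Hw; apply J; auto.
Qed.

(** * Linear algebra in R^3 *)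

Definition comb (a c e : R) (U V W : vec) : vec :=
  vadd (vadd (vscal a U) (vscal c V)) (vscal e W).

Definition cross (a b : vec) : vec :=
  (vy a * vz b - vz a * vy b, vz a * vx b - vx a * vz b, vx a * vy b - vy a * vx b).

Ltac vec_coords :=
  repeat match goal with X : vec |- _ => destruct X as [[? ?] ?] end;
  unfold comb, cross, dot, det3, vadd, vscal, vx, vy, vz in *; simpl in *.

Ltac vec_ring := vec_coords; f_equal; [f_equal|]; ring.

Lemma vec_eq (a b : vec) : vx a = vx b -> vy a = vy b -> vz a = vz b -> a = b.
Proof. vec_coords; intros; now subst. Qed.

Lemma det3_comb a c e U V W :
  det3 (comb a c e U V W) V W = a * det3 U V W /\
  det3 U (comb a c e U V W) W = c * det3 U V W /\
  det3 U V (comb a c e U V W) = e * det3 U V W.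
Proof. vec_coords; repeat split; ring. Qed.

Lemma comb_inj a c e a' c' e' U V W : det3 U V W <> 0 ->
  comb a c e U V W = comb a' c' e' U V W -> a = a' /\ c = c' /\ e = e'.
Proof.
  intros HD H.
  destruct (det3_comb a c e U V W) as (A1 & A2 & A3).
  destruct (det3_comb a' c' e' U V W) as (B1 & B2 & B3).
  rewrite H in A1, A2, A3.
  repeat split; apply Rmult_eq_reg_r with (det3 U V W); congruence.
Qed.

Lemma comb_cramer U V W X : det3 U V W <> 0 ->
  X = comb (det3 X V W / det3 U V W) (det3 U X W / det3 U V W)
           (det3 U V X / det3 U V W) U V W.
Proof. vec_coords; intros HD; f_equal; [f_equal|]; field; auto. Qed.

Lemma comb_e1 U V W : U = comb 1 0 0 U V W.
Proof. vec_ring. Qed.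

Lemma comb_e2 U V W : V = comb 0 1 0 U V W.
Proof. vec_ring. Qed.

Lemma comb_tangent a c U V W : vadd (vscal a U) (vscal c V) = comb a c 0 U V W.
Proof. vec_ring. Qed.

Lemma comb_collect a1 a2 a3 x p1 p2 p3 y q1 q2 q3 z s1 s2 s3 U V W :
  vadd (vadd (vadd (comb a1 a2 a3 U V W) (vscal x (comb p1 p2 p3 U V W)))
             (vscal y (comb q1 q2 q3 U V W)))
       (vscal z (comb s1 s2 s3 U V W))
  = comb (a1 + x * p1 + y * q1 + z * s1) (a2 + x * p2 + y * q2 + z * s2)
         (a3 + x * p3 + y * q3 + z * s3) U V W.
Proof. vec_ring. Qed.

Lemma dot_comb n a c e U V W :
  dot n (comb a c e U V W) = a * dot n U + c * dot n V + e * dot n W.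
Proof. vec_coords; ring. Qed.

Lemma det3_dot_products N P Q U V W :
  det3 (dot N U, dot N V, dot N W) (dot P U, dot P V, dot P W) (dot Q U, dot Q V, dot Q W)
  = det3 N P Q * det3 U V W.
Proof. vec_coords; ring. Qed.

Lemma det3_cross_expansion n U V W : vscal (det3 U V W) n =
  vadd (vadd (vscal (dot n U) (cross V W)) (vscal (dot n V) (cross W U)))
       (vscal (dot n W) (cross U V)).
Proof. vec_ring. Qed.

Lemma conormal_eq n U V W : det3 U V W <> 0 ->
  dot n U = 0 -> dot n V = 0 -> dot n W = 1 -> n = vscal (/ det3 U V W) (cross U V).
Proof.
  intros HD H1 H2 H3.
  assert (T : vscal (det3 U V W) n = cross U V).
  { rewrite det3_cross_expansion, H1, H2, H3; vec_ring. }
  rewrite <- T; revert HD; generalize (det3 U V W); intros d HD.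
  vec_coords; f_equal; [f_equal|]; field; auto.
Qed.

Definition vpartial (b : bool) : vfun -> vfun := if b then vdu else vdv.

Lemma vpartial_coords b F u v : vpartial b F u v =
  (partial b (compx F) u v, partial b (compy F) u v, partial b (compz F) u v).
Proof. now destruct b. Qed.

Lemma vsmooth_on_vpartial r b F : vsmooth_on r F -> vsmooth_on r (vpartial b F).
Proof.
  intros (Hx & Hy & Hz); destruct b; (split; [|split]);
    [ exact (smooth_on_partial r true _ Hx) | exact (smooth_on_partial r true _ Hy)
    | exact (smooth_on_partial r true _ Hz) | exact (smooth_on_partial r false _ Hx)
    | exact (smooth_on_partial r false _ Hy) | exact (smooth_on_partial r false _ Hz) ].
Qed.

Lemma vsmooth_on_vdu r F : vsmooth_on r F -> vsmooth_on r (vdu F).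
Proof. apply (vsmooth_on_vpartial r true). Qed.

Lemma vsmooth_on_vdv r F : vsmooth_on r F -> vsmooth_on r (vdv F).
Proof. apply (vsmooth_on_vpartial r false). Qed.

Ltac smooth_tac :=
  unfold compx, compy, compz in *;
  repeat first [ assumption | apply smooth_on_plus | apply smooth_on_minus
               | apply smooth_on_mult | apply smooth_on_opp | apply smooth_on_const ].

Lemma smooth_on_det3 r X Y Z : vsmooth_on r X -> vsmooth_on r Y -> vsmooth_on r Z ->
  smooth_on r (fun u v => det3 (X u v) (Y u v) (Z u v)).
Proof. intros (? & ? & ?) (? & ? & ?) (? & ? & ?); unfold det3; smooth_tac. Qed.

Lemma vsmooth_on_schwarz r F u v : vsmooth_on r F -> coord_disc r u v ->
  vdu (vdv F) u v = vdv (vdu F) u v.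
Proof.
  intros (Hx & Hy & Hz) Hd; apply vec_eq.
  - exact (smooth_on_schwarz r (compx F) u v Hx Hd).
  - exact (smooth_on_schwarz r (compy F) u v Hy Hd).
  - exact (smooth_on_schwarz r (compz F) u v Hz Hd).
Qed.

Lemma partial_lincomb r b (a c e X Y Z F : sfun) (k : R) u v :
  smooth_on r a -> smooth_on r c -> smooth_on r e ->
  smooth_on r X -> smooth_on r Y -> smooth_on r Z ->
  eq_on_disc r F (fun u v => a u v * X u v + c u v * Y u v + e u v * Z u v + k) ->
  coord_disc r u v ->
  partial b F u v
  = partial b a u v * X u v + a u v * partial b X u v
    + (partial b c u v * Y u v + c u v * partial b Y u v)
    + (partial b e u v * Z u v + e u v * partial b Z u v).
Proof.
  intros Ha Hc He HX HY HZ HF Hd.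
  rewrite (partial_ext r b _ _ HF u v Hd).
  rewrite (partial_plus_on r b); [| smooth_tac | apply smooth_on_const | exact Hd].
  rewrite partial_const, Rplus_0_r.
  rewrite (partial_plus_on r b); [| smooth_tac | smooth_tac | exact Hd].
  rewrite (partial_plus_on r b); [| smooth_tac | smooth_tac | exact Hd].
  now rewrite !(partial_mult_on r b).
Qed.

Lemma vpartial_comb r b (a c e : sfun) (U V W F : vfun) (q : vec) :
  smooth_on r a -> smooth_on r c -> smooth_on r e ->
  vsmooth_on r U -> vsmooth_on r V -> vsmooth_on r W ->
  (forall u v, coord_disc r u v ->
     F u v = vadd (comb (a u v) (c u v) (e u v) (U u v) (V u v) (W u v)) q) ->
  forall u v, coord_disc r u v ->
  vpartial b F u v
  = vadd (vadd (vadd (comb (partial b a u v) (partial b c u v) (partial b e u v)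
                           (U u v) (V u v) (W u v))
                     (vscal (a u v) (vpartial b U u v)))
               (vscal (c u v) (vpartial b V u v)))
         (vscal (e u v) (vpartial b W u v)).
Proof.
  intros Ha Hc He (Ux & Uy & Uz) (Vx & Vy & Vz) (Wx & Wy & Wz) HF u v Hd.
  rewrite !vpartial_coords; apply vec_eq; unfold comb, vadd, vscal; cbn [vx vy vz fst snd];
    [ rewrite (partial_lincomb r b a c e (compx U) (compx V) (compx W) (compx F) (vx q))
    | rewrite (partial_lincomb r b a c e (compy U) (compy V) (compy W) (compy F) (vy q))
    | rewrite (partial_lincomb r b a c e (compz U) (compz V) (compz W) (compz F) (vz q)) ];
    auto; unfold compx, compy, compz; try ring;
    intros s t Hst; rewrite (HF s t Hst); unfold comb, vadd, vscal; cbn [vx vy vz fst snd]; ring.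
Qed.

Lemma partial_dot r b N X u v : vsmooth_on r N -> vsmooth_on r X -> coord_disc r u v ->
  partial b (fun s t => dot (N s t) (X s t)) u v
  = dot (vpartial b N u v) (X u v) + dot (N u v) (vpartial b X u v).
Proof.
  intros (Nx & Ny & Nz) (Xx & Xy & Xz) Hd.
  change (fun s t => dot (N s t) (X s t)) with
    (fun s t => (compx N s t * compx X s t + compy N s t * compy X s t)
                + compz N s t * compz X s t).
  rewrite (partial_plus_on r b); [| smooth_tac | smooth_tac | exact Hd].
  rewrite (partial_plus_on r b); [| smooth_tac | smooth_tac | exact Hd].
  rewrite !(partial_mult_on r b), !vpartial_coords; auto.
  unfold dot, compx, compy, compz; cbn [vx vy vz fst snd]; ring.
Qed.

Lemma partial_locally_const r b F c u v :
  eq_on_disc r F (fun _ _ => c) -> coord_disc r u v -> partial b F u v = 0.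
Proof. intros H Hd; rewrite (partial_ext r b _ _ H u v Hd); apply partial_const. Qed.

(** * Coordinates in the frame (f_u, f_v, xi) *)

Section Frame.

Variables (r : R) (f xi : vfun).
Hypotheses (Hf : vsmooth_on r f) (Hxi : vsmooth_on r xi)
  (Hdet : forall u v, coord_disc r u v -> det3 (vdu f u v) (vdv f u v) (xi u v) <> 0).

Definition frame_det : sfun := fun u v => det3 (vdu f u v) (vdv f u v) (xi u v).

Definition coord_u (X : vfun) : sfun :=
  fun u v => det3 (X u v) (vdv f u v) (xi u v) / frame_det u v.
Definition coord_v (X : vfun) : sfun :=
  fun u v => det3 (vdu f u v) (X u v) (xi u v) / frame_det u v.
Definition coord_n (X : vfun) : sfun :=
  fun u v => det3 (vdu f u v) (vdv f u v) (X u v) / frame_det u v.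

Lemma smooth_frame_det : smooth_on r frame_det.
Proof. apply smooth_on_det3; auto using vsmooth_on_vdu, vsmooth_on_vdv. Qed.

Lemma smooth_coord_u X : vsmooth_on r X -> smooth_on r (coord_u X).
Proof.
  intros HX; apply smooth_on_div; auto using smooth_frame_det.
  apply smooth_on_det3; auto using vsmooth_on_vdv.
Qed.

Lemma smooth_coord_v X : vsmooth_on r X -> smooth_on r (coord_v X).
Proof.
  intros HX; apply smooth_on_div; auto using smooth_frame_det.
  apply smooth_on_det3; auto using vsmooth_on_vdu.
Qed.

Lemma smooth_coord_n X : vsmooth_on r X -> smooth_on r (coord_n X).
Proof.
  intros HX; apply smooth_on_div; auto using smooth_frame_det.
  apply smooth_on_det3; auto using vsmooth_on_vdu, vsmooth_on_vdv.
Qed.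

Lemma frame_decomp X u v : coord_disc r u v ->
  X u v = comb (coord_u X u v) (coord_v X u v) (coord_n X u v)
               (vdu f u v) (vdv f u v) (xi u v).
Proof. intros Hd; apply comb_cramer, Hdet, Hd. Qed.

Lemma frame_coords_unique X u v a c e : coord_disc r u v ->
  X u v = comb a c e (vdu f u v) (vdv f u v) (xi u v) ->
  a = coord_u X u v /\ c = coord_v X u v /\ e = coord_n X u v.
Proof.
  intros Hd H; apply (comb_inj _ _ _ _ _ _ _ _ _ (Hdet u v Hd)).
  rewrite <- H; apply frame_decomp, Hd.
Qed.

End Frame.

Section FrameCoordinatesFlat.

Variables (r : R) (k : nat) (gamma0 : R).
Variables (alpha beta gamma rho b11 b12 b22 G1_11 G2_11 G1_12 G2_12 G1_22 G2_22 : sfun).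

Hypothesis Hr : 0 < r.
Hypotheses (Salpha : smooth_on r alpha) (Sbeta : smooth_on r beta)
  (Sgamma : smooth_on r gamma) (Srho : smooth_on r rho)
  (Sb11 : smooth_on r b11) (Sb12 : smooth_on r b12) (Sb22 : smooth_on r b22)
  (SG1_11 : smooth_on r G1_11) (SG2_11 : smooth_on r G2_11)
  (SG1_12 : smooth_on r G1_12) (SG2_12 : smooth_on r G2_12)
  (SG1_22 : smooth_on r G1_22) (SG2_22 : smooth_on r G2_22).

Hypotheses
  (Halpha_u : eq_on_disc r (du alpha) (fun u v =>
     1 + gamma u v * b11 u v - alpha u v * G1_11 u v - beta u v * G1_12 u v))
  (Hbeta_u : eq_on_disc r (du beta) (fun u v =>
     0 + gamma u v * b12 u v - alpha u v * G2_11 u v - beta u v * G2_12 u v))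
  (Hgamma_u : eq_on_disc r (du gamma) (fun u v => - (alpha u v * rho u v)))
  (Halpha_v : eq_on_disc r (dv alpha) (fun u v =>
     0 + gamma u v * b12 u v - alpha u v * G1_12 u v - beta u v * G1_22 u v))
  (Hbeta_v : eq_on_disc r (dv beta) (fun u v =>
     1 + gamma u v * b22 u v - alpha u v * G2_12 u v - beta u v * G2_22 u v))
  (Hgamma_v : eq_on_disc r (dv gamma) (fun u v => - (beta u v * rho u v))).

Hypotheses (Halpha0 : alpha 0 0 = 0) (Hbeta0 : beta 0 0 = 0)
  (Hgamma0 : gamma 0 0 = gamma0) (Hlambda0 : 1 + gamma0 * b11 0 0 = 0).

Hypotheses (Fdiff : flat_to k (fun u v => b11 u v - b22 u v)) (Fb12 : flat_to k b12).

Let D0 : coord_disc r 0 0 := coord_disc_origin r Hr.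

Lemma gamma0_neq0 : gamma0 <> 0.
Proof. intros E; rewrite E in Hlambda0; lra. Qed.

Lemma dword_b22 w : (length w < k)%nat -> dword w b22 0 0 = dword w b11 0 0.
Proof.
  intros Hw; pose proof (Fdiff w Hw) as H.
  rewrite (dword_minus r w b11 b22) in H; auto; lra.
Qed.

Lemma dword_frame_rhs m c b X Y w :
  smooth_on r b -> smooth_on r X -> smooth_on r Y ->
  flat_to (S m) alpha -> flat_to (S m) beta ->
  flat_to (S (S m)) (fun u v => gamma u v - gamma0) -> (length w <= m)%nat ->
  dword w (fun u v => c + gamma u v * b u v - alpha u v * X u v - beta u v * Y u v) 0 0
  = dword w (fun u v => c + gamma0 * b u v) 0 0.
Proof.
  intros Sb SX SY Fa Fb Fg Hw.
  rewrite (dword_ext r w _ (fun u v => (c + gamma0 * b u v) + (gamma u v - gamma0) * b u v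
                                       - alpha u v * X u v - beta u v * Y u v));
    [| intros u v _; ring | exact D0].
  rewrite !(dword_minus r), (dword_plus r); smooth_tac.
  rewrite (flat_to_mult_l r (S (S m)) (fun u v => gamma u v - gamma0)),
    (flat_to_mult_l r (S m) alpha), (flat_to_mult_l r (S m) beta); smooth_tac;
    [ring | lia | lia | lia].
Qed.

Lemma frame_rhs_flat m c b X Y :
  smooth_on r b -> smooth_on r X -> smooth_on r Y ->
  flat_to (S m) alpha -> flat_to (S m) beta ->
  flat_to (S (S m)) (fun u v => gamma u v - gamma0) ->
  c + gamma0 * b 0 0 = 0 ->
  (forall w, w <> [] -> (length w <= m)%nat -> dword w b 0 0 = 0) ->
  flat_to (S m) (fun u v => c + gamma u v * b u v - alpha u v * X u v - beta u v * Y u v).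
Proof.
  intros Sb SX SY Fa Fb Fg H0 Hb w Hw.
  rewrite (dword_frame_rhs m); auto; [|lia].
  destruct w as [|b0 w]; [exact H0|].
  assert (Hne : b0 :: w <> []) by discriminate.
  simpl in Hw; rewrite (dword_affine r), Hb; auto; [ring | simpl; lia].
Qed.

Lemma gamma_flat_step m : flat_to (S m) alpha -> flat_to (S m) beta ->
  flat_to (S (S m)) (fun u v => gamma u v - gamma0).
Proof.
  intros Fa Fb; apply flat_to_S; [simpl; rewrite Hgamma0; ring|].
  intros b; apply (flat_to_eq_on_disc r _ _ (partial b gamma) Hr);
    [now apply partial_sub_const|].
  destruct b; simpl.
  - apply (flat_to_eq_on_disc r _ _ _ Hr Hgamma_u).
    intros w Hw; rewrite dword_opp, (flat_to_mult_l r (S m) alpha); auto; ring.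
  - apply (flat_to_eq_on_disc r _ _ _ Hr Hgamma_v).
    intros w Hw; rewrite dword_opp, (flat_to_mult_l r (S m) beta); auto; ring.
Qed.

(* At the origin the mixed partials of alpha are gamma0 times derivatives of b11 and b12,
   those of beta gamma0 times derivatives of b12 and b22; their equality kills the
   derivatives of b11 of order at most m. *)
Lemma b11_flat_step m : (m < k)%nat -> flat_to (S m) alpha -> flat_to (S m) beta ->
  forall w, w <> [] -> (length w <= m)%nat -> dword w b11 0 0 = 0.
Proof.
  intros Hmk Fa Fb w Hne Hw.
  pose proof (gamma_flat_step m Fa Fb) as Fg.
  destruct (exists_last Hne) as (w' & b & ->).
  assert (Hlen : forall b', (length (w' ++ [b']) <= m)%nat)
    by (intros; rewrite length_app in *; simpl in *; lia).
  assert (Hne' : forall b', w' ++ [b'] <> []) by (intros b'; now destruct w').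
  apply Rmult_eq_reg_l with gamma0; [rewrite Rmult_0_r | exact gamma0_neq0].
  destruct b.
  - pose proof (dword_schwarz r w' beta Sbeta 0 0 D0) as E.
    rewrite (dword_ext r _ _ _ Hbeta_u 0 0 D0), (dword_ext r _ _ _ Hbeta_v 0 0 D0) in E.
    rewrite !(dword_frame_rhs m), !(dword_affine r), Fb12 in E; auto;
      [| specialize (Hlen false); lia].
    rewrite <- dword_b22; [lra | specialize (Hlen true); lia].
  - pose proof (dword_schwarz r w' alpha Salpha 0 0 D0) as E.
    rewrite (dword_ext r _ _ _ Halpha_u 0 0 D0), (dword_ext r _ _ _ Halpha_v 0 0 D0) in E.
    rewrite !(dword_frame_rhs m), !(dword_affine r), (Fb12 (w' ++ [true])) in E;
      auto; [lra | specialize (Hlen true); lia].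
Qed.

Lemma frame_coords_flat_step m : (m < k)%nat ->
  flat_to (S m) alpha -> flat_to (S m) beta ->
  flat_to (S (S m)) alpha /\ flat_to (S (S m)) beta.
Proof.
  intros Hmk Fa Fb.
  pose proof (gamma_flat_step m Fa Fb) as Fg.
  pose proof (b11_flat_step m Hmk Fa Fb) as Z11.
  assert (Z12 : forall w, w <> [] -> (length w <= m)%nat -> dword w b12 0 0 = 0)
    by (intros; apply Fb12; lia).
  assert (Z22 : forall w, w <> [] -> (length w <= m)%nat -> dword w b22 0 0 = 0)
    by (intros; rewrite dword_b22; auto; lia).
  assert (b12_0 : b12 0 0 = 0) by exact (Fb12 [] ltac:(simpl; lia)).
  assert (b22_0 : b22 0 0 = b11 0 0) by exact (dword_b22 [] ltac:(simpl; lia)).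
  split; apply flat_to_S; auto; intros [|].
  - apply (flat_to_eq_on_disc r _ _ _ Hr Halpha_u), frame_rhs_flat; auto.
  - apply (flat_to_eq_on_disc r _ _ _ Hr Halpha_v), frame_rhs_flat; auto.
    rewrite b12_0; ring.
  - apply (flat_to_eq_on_disc r _ _ _ Hr Hbeta_u), frame_rhs_flat; auto.
    rewrite b12_0; ring.
  - apply (flat_to_eq_on_disc r _ _ _ Hr Hbeta_v), frame_rhs_flat; auto.
    now rewrite b22_0.
Qed.

Lemma frame_coords_flat : flat_to (S k) alpha /\ flat_to (S k) beta.
Proof.
  assert (H : forall m, (m <= k)%nat -> flat_to (S m) alpha /\ flat_to (S m) beta).
  { induction m as [|m IH]; intros Hm.
    - split; apply flat_to_S; auto; intros b w Hw; simpl in Hw; lia.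
    - destruct IH as [Fa Fb]; [lia|]; apply frame_coords_flat_step; auto; lia. }
  now apply H.
Qed.

End FrameCoordinatesFlat.

(** * Equiaffine charts *)

Set Implicit Arguments.

Record equiaffine_chart (r : R) (f xi nu : vfun) (rho b11 b12 b21 b22 : sfun) : Prop := {
  chart_radius : 0 < r;
  chart_smooth_f : vsmooth_on r f;
  chart_smooth_xi : vsmooth_on r xi;
  chart_transversal : forall u v, coord_disc r u v ->
    det3 (vdu f u v) (vdv f u v) (xi u v) <> 0;
  chart_rho_pos : forall u v, coord_disc r u v -> 0 < rho u v;
  chart_f_uu : forall u v, coord_disc r u v -> exists a c : R,
    vdu (vdu f) u v = comb a c (rho u v) (vdu f u v) (vdv f u v) (xi u v);
  chart_f_vv : forall u v, coord_disc r u v -> exists a c : R,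
    vdv (vdv f) u v = comb a c (rho u v) (vdu f u v) (vdv f u v) (xi u v);
  chart_f_uv : forall u v, coord_disc r u v -> exists a c : R,
    vdv (vdu f) u v = comb a c 0 (vdu f u v) (vdv f u v) (xi u v);
  chart_xi_u : forall u v, coord_disc r u v ->
    vdu xi u v = vadd (vscal (- b11 u v) (vdu f u v)) (vscal (- b21 u v) (vdv f u v));
  chart_xi_v : forall u v, coord_disc r u v ->
    vdv xi u v = vadd (vscal (- b12 u v) (vdu f u v)) (vscal (- b22 u v) (vdv f u v));
  chart_b_sym : forall u v, coord_disc r u v -> b12 u v = b21 u v;
  chart_conormal : forall u v, coord_disc r u v ->
    dot (nu u v) (vdu f u v) = 0 /\ dot (nu u v) (vdv f u v) = 0 /\
    dot (nu u v) (xi u v) = 1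
}.

Unset Implicit Arguments.

Section EquiaffineChart.

Context {r : R} {f xi nu : vfun} {rho b11 b12 b21 b22 : sfun}.
Hypothesis C : equiaffine_chart r f xi nu rho b11 b12 b21 b22.

Let Hr := chart_radius C.
Let D0 : coord_disc r 0 0 := coord_disc_origin r Hr.
Let Hf := chart_smooth_f C.
Let Hxi := chart_smooth_xi C.
Let Hdet := chart_transversal C.
Let Hfu : vsmooth_on r (vdu f) := vsmooth_on_vdu r f Hf.
Let Hfv : vsmooth_on r (vdv f) := vsmooth_on_vdv r f Hf.

(* Christoffel symbols of the induced connection: f_jk = G1_jk f_u + G2_jk f_v + h_jk xi. *)
Definition G1_11 : sfun := coord_u f xi (vdu (vdu f)).
Definition G2_11 : sfun := coord_v f xi (vdu (vdu f)).
Definition G1_12 : sfun := coord_u f xi (vdv (vdu f)).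
Definition G2_12 : sfun := coord_v f xi (vdv (vdu f)).
Definition G1_22 : sfun := coord_u f xi (vdv (vdv f)).
Definition G2_22 : sfun := coord_v f xi (vdv (vdv f)).

Lemma gauss_uu u v : coord_disc r u v ->
  vdu (vdu f) u v = comb (G1_11 u v) (G2_11 u v) (rho u v) (vdu f u v) (vdv f u v) (xi u v)
  /\ rho u v = coord_n f xi (vdu (vdu f)) u v.
Proof.
  intros Hd; destruct (chart_f_uu C Hd) as (a & c & H).
  destruct (frame_coords_unique r f xi Hdet _ u v _ _ _ Hd H) as (Ea & Ec & Ee).
  rewrite Ea, Ec in H; auto.
Qed.

Lemma gauss_vv u v : coord_disc r u v ->
  vdv (vdv f) u v = comb (G1_22 u v) (G2_22 u v) (rho u v) (vdu f u v) (vdv f u v) (xi u v).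
Proof.
  intros Hd; destruct (chart_f_vv C Hd) as (a & c & H).
  destruct (frame_coords_unique r f xi Hdet _ u v _ _ _ Hd H) as (Ea & Ec & _).
  now rewrite Ea, Ec in H.
Qed.

Lemma gauss_uv u v : coord_disc r u v ->
  vdv (vdu f) u v = comb (G1_12 u v) (G2_12 u v) 0 (vdu f u v) (vdv f u v) (xi u v).
Proof.
  intros Hd; destruct (chart_f_uv C Hd) as (a & c & H).
  destruct (frame_coords_unique r f xi Hdet _ u v _ _ _ Hd H) as (Ea & Ec & _).
  now rewrite Ea, Ec in H.
Qed.

Lemma weingarten_u u v : coord_disc r u v ->
  vdu xi u v = comb (- b11 u v) (- b12 u v) 0 (vdu f u v) (vdv f u v) (xi u v).
Proof.
  intros Hd; rewrite (chart_xi_u C Hd), (chart_b_sym C Hd); apply comb_tangent.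
Qed.

Lemma weingarten_v u v : coord_disc r u v ->
  vdv xi u v = comb (- b12 u v) (- b22 u v) 0 (vdu f u v) (vdv f u v) (xi u v).
Proof. intros Hd; rewrite (chart_xi_v C Hd); apply comb_tangent. Qed.

Lemma smooth_rho : smooth_on r rho.
Proof.
  apply smooth_on_ext with (coord_n f xi (vdu (vdu f))).
  - intros u v Hd; symmetry; apply gauss_uu, Hd.
  - apply smooth_coord_n; auto using vsmooth_on_vdu.
Qed.

Lemma smooth_b11 : smooth_on r b11.
Proof.
  apply smooth_on_ext with (fun u v => - coord_u f xi (vdu xi) u v).
  - intros u v Hd.
    destruct (frame_coords_unique r f xi Hdet _ u v _ _ _ Hd (weingarten_u u v Hd)) as (E & _).
    lra.
  - apply smooth_on_opp, smooth_coord_u; auto using vsmooth_on_vdu.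
Qed.

Lemma smooth_b12 : smooth_on r b12.
Proof.
  apply smooth_on_ext with (fun u v => - coord_u f xi (vdv xi) u v).
  - intros u v Hd.
    destruct (frame_coords_unique r f xi Hdet _ u v _ _ _ Hd (weingarten_v u v Hd)) as (E & _).
    lra.
  - apply smooth_on_opp, smooth_coord_u; auto using vsmooth_on_vdv.
Qed.

Lemma smooth_b22 : smooth_on r b22.
Proof.
  apply smooth_on_ext with (fun u v => - coord_v f xi (vdv xi) u v).
  - intros u v Hd.
    destruct (frame_coords_unique r f xi Hdet _ u v _ _ _ Hd (weingarten_v u v Hd))
      as (_ & E & _).
    lra.
  - apply smooth_on_opp, smooth_coord_v; auto using vsmooth_on_vdv.
Qed.

Lemma smooth_christoffel :
  smooth_on r G1_11 /\ smooth_on r G2_11 /\ smooth_on r G1_12 /\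
  smooth_on r G2_12 /\ smooth_on r G1_22 /\ smooth_on r G2_22.
Proof.
  unfold G1_11, G2_11, G1_12, G2_12, G1_22, G2_22.
  pose proof (vsmooth_on_vdu r _ Hfu) as Hfuu.
  pose proof (vsmooth_on_vdv r _ Hfu) as Hfuv.
  pose proof (vsmooth_on_vdv r _ Hfv) as Hfvv.
  refine (conj _ (conj _ (conj _ (conj _ (conj _ _)))));
    [ exact (smooth_coord_u r f xi Hf Hxi Hdet _ Hfuu)
    | exact (smooth_coord_v r f xi Hf Hxi Hdet _ Hfuu)
    | exact (smooth_coord_u r f xi Hf Hxi Hdet _ Hfuv)
    | exact (smooth_coord_v r f xi Hf Hxi Hdet _ Hfuv)
    | exact (smooth_coord_u r f xi Hf Hxi Hdet _ Hfvv)
    | exact (smooth_coord_v r f xi Hf Hxi Hdet _ Hfvv) ].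
Qed.

Definition center : vec := vadd (f 0 0) (vscal (/ b11 0 0) (xi 0 0)).
Definition rel_pos : vfun := fun u v => vadd (f u v) (vscal (-1) center).
Definition alpha : sfun := coord_u f xi rel_pos.
Definition beta : sfun := coord_v f xi rel_pos.
Definition gamma : sfun := coord_n f xi rel_pos.

Lemma vsmooth_rel_pos : vsmooth_on r rel_pos.
Proof.
  destruct Hf as (Hx & Hy & Hz); unfold rel_pos, vadd, vscal.
  split; [|split]; unfold compx, compy, compz in *; cbn [vx vy vz fst snd];
    apply smooth_on_plus; auto using smooth_on_const.
Qed.

Lemma smooth_frame_coords : smooth_on r alpha /\ smooth_on r beta /\ smooth_on r gamma.
Proof.
  refine (conj _ (conj _ _)).
  - exact (smooth_coord_u r f xi Hf Hxi Hdet _ vsmooth_rel_pos).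
  - exact (smooth_coord_v r f xi Hf Hxi Hdet _ vsmooth_rel_pos).
  - exact (smooth_coord_n r f xi Hf Hxi Hdet _ vsmooth_rel_pos).
Qed.

Lemma position_decomp u v : coord_disc r u v ->
  f u v = vadd (comb (alpha u v) (beta u v) (gamma u v) (vdu f u v) (vdv f u v) (xi u v))
               center.
Proof.
  intros Hd; unfold alpha, beta, gamma.
  rewrite <- (frame_decomp r f xi Hdet rel_pos u v Hd); unfold rel_pos.
  generalize (f u v) center; intros; vec_ring.
Qed.

Lemma frame_coords_origin :
  alpha 0 0 = 0 /\ beta 0 0 = 0 /\ gamma 0 0 = - / b11 0 0.
Proof.
  assert (H : rel_pos 0 0 = comb 0 0 (- / b11 0 0) (vdu f 0 0) (vdv f 0 0) (xi 0 0)).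
  { unfold rel_pos, center; generalize (/ b11 0 0) (f 0 0) (vdu f 0 0) (vdv f 0 0) (xi 0 0).
    intros; vec_ring. }
  destruct (frame_coords_unique r f xi Hdet _ 0 0 _ _ _ D0 H) as (E1 & E2 & E3).
  auto.
Qed.

Lemma frame_system_u u v : coord_disc r u v ->
  du alpha u v = 1 + gamma u v * b11 u v - alpha u v * G1_11 u v - beta u v * G1_12 u v /\
  du beta u v = 0 + gamma u v * b12 u v - alpha u v * G2_11 u v - beta u v * G2_12 u v /\
  du gamma u v = - (alpha u v * rho u v).
Proof.
  intros Hd; destruct smooth_frame_coords as (Sa & Sb & Sg).
  pose proof (vpartial_comb r true _ _ _ _ _ _ f center Sa Sb Sg Hfu Hfv Hxi
                position_decomp u v Hd) as E; cbn [vpartial partial] in E.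
  rewrite (vsmooth_on_schwarz r f u v Hf Hd), (proj1 (gauss_uu u v Hd)), (gauss_uv u v Hd),
    (weingarten_u u v Hd), comb_collect in E.
  destruct (comb_inj _ _ _ _ _ _ _ _ _ (Hdet u v Hd) (eq_trans (eq_sym (comb_e1 _ _ _)) E))
    as (E1 & E2 & E3).
  repeat split; lra.
Qed.

Lemma frame_system_v u v : coord_disc r u v ->
  dv alpha u v = 0 + gamma u v * b12 u v - alpha u v * G1_12 u v - beta u v * G1_22 u v /\
  dv beta u v = 1 + gamma u v * b22 u v - alpha u v * G2_12 u v - beta u v * G2_22 u v /\
  dv gamma u v = - (beta u v * rho u v).
Proof.
  intros Hd; destruct smooth_frame_coords as (Sa & Sb & Sg).
  pose proof (vpartial_comb r false _ _ _ _ _ _ f center Sa Sb Sg Hfu Hfv Hxi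
                position_decomp u v Hd) as E; cbn [vpartial partial] in E.
  rewrite (gauss_uv u v Hd), (gauss_vv u v Hd), (weingarten_v u v Hd), comb_collect in E.
  destruct (comb_inj _ _ _ _ _ _ _ _ _ (Hdet u v Hd) (eq_trans (eq_sym (comb_e2 _ _ _)) E))
    as (E1 & E2 & E3).
  repeat split; lra.
Qed.

Lemma conormal_formula u v : coord_disc r u v ->
  nu u v = vscal (/ frame_det f xi u v) (cross (vdu f u v) (vdv f u v)).
Proof.
  intros Hd; destruct (chart_conormal C Hd) as (N1 & N2 & N3).
  apply conormal_eq; auto.
Qed.

Lemma vsmooth_nu : vsmooth_on r nu.
Proof.
  assert (SI : smooth_on r (fun u v => / frame_det f xi u v))
    by exact (smooth_on_inv r _ Hdet (smooth_frame_det r f xi Hf Hxi)).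
  destruct Hfu as (Ux & Uy & Uz), Hfv as (Vx & Vy & Vz).
  split; [|split]; (eapply smooth_on_ext;
    [ intros u v Hd; unfold compx, compy, compz; rewrite (conormal_formula u v Hd);
      reflexivity
    | unfold vscal, cross; cbn [vx vy vz fst snd]; smooth_tac ]).
Qed.

Lemma conormal_partial_dot b X c u v : vsmooth_on r X ->
  (forall s t, coord_disc r s t -> dot (nu s t) (X s t) = c) -> coord_disc r u v ->
  dot (vpartial b nu u v) (X u v) = - dot (nu u v) (vpartial b X u v).
Proof.
  intros HX H Hd.
  pose proof (partial_dot r b nu X u v vsmooth_nu HX Hd) as E.
  rewrite (partial_locally_const r b _ c u v H Hd) in E; lra.
Qed.

Lemma conormal_dot_comb u v a c e : coord_disc r u v ->
  dot (nu u v) (comb a c e (vdu f u v) (vdv f u v) (xi u v)) = e.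
Proof.
  intros Hd; destruct (chart_conormal C Hd) as (N1 & N2 & N3).
  rewrite dot_comb, N1, N2, N3; ring.
Qed.

Lemma conormal_derivative_dots u v : coord_disc r u v ->
  (dot (vdu nu u v) (vdu f u v), dot (vdu nu u v) (vdv f u v), dot (vdu nu u v) (xi u v))
  = (- rho u v, 0, 0) /\
  (dot (vdv nu u v) (vdu f u v), dot (vdv nu u v) (vdv f u v), dot (vdv nu u v) (xi u v))
  = (0, - rho u v, 0).
Proof.
  intros Hd.
  assert (Nu : forall s t, coord_disc r s t -> dot (nu s t) (vdu f s t) = 0)
    by (intros s t H; apply (chart_conormal C H)).
  assert (Nv : forall s t, coord_disc r s t -> dot (nu s t) (vdv f s t) = 0)
    by (intros s t H; apply (chart_conormal C H)).
  assert (Nx : forall s t, coord_disc r s t -> dot (nu s t) (xi s t) = 1)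
    by (intros s t H; apply (chart_conormal C H)).
  pose proof (conormal_partial_dot true _ _ u v Hfu Nu Hd) as Puu.
  pose proof (conormal_partial_dot true _ _ u v Hfv Nv Hd) as Puv.
  pose proof (conormal_partial_dot true _ _ u v Hxi Nx Hd) as Pux.
  pose proof (conormal_partial_dot false _ _ u v Hfu Nu Hd) as Pvu.
  pose proof (conormal_partial_dot false _ _ u v Hfv Nv Hd) as Pvv.
  pose proof (conormal_partial_dot false _ _ u v Hxi Nx Hd) as Pvx.
  cbn [vpartial] in Puu, Puv, Pux, Pvu, Pvv, Pvx.
  rewrite Puu, Puv, Pux, Pvu, Pvv, Pvx.
  rewrite (vsmooth_on_schwarz r f u v Hf Hd), (proj1 (gauss_uu u v Hd)), (gauss_uv u v Hd),
    (gauss_vv u v Hd), (weingarten_u u v Hd), (weingarten_v u v Hd),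
    !conormal_dot_comb by exact Hd.
  split; f_equal; [f_equal| |f_equal|]; ring.
Qed.

Lemma delta0_eq :
  frame_det f xi 0 0 * det3 (nu 0 0) (vdu nu 0 0) (vdv nu 0 0) / rho 0 0 = rho 0 0.
Proof.
  pose proof (det3_dot_products (nu 0 0) (vdu nu 0 0) (vdv nu 0 0)
                (vdu f 0 0) (vdv f 0 0) (xi 0 0)) as B.
  destruct (chart_conormal C D0) as (N1 & N2 & N3).
  destruct (conormal_derivative_dots 0 0 D0) as [Du Dv].
  rewrite N1, N2, N3, Du, Dv in B.
  assert (R0 : rho 0 0 <> 0) by exact (Rgt_not_eq _ _ (chart_rho_pos C D0)).
  unfold frame_det; rewrite Rmult_comm, <- B.
  unfold det3, vx, vy, vz; simpl; field; exact R0.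
Qed.

Definition support : sfun := fun u v => dot (nu u v) (rel_pos u v).

Lemma support_eq_gamma : eq_on_disc r support gamma.
Proof.
  intros u v Hd; unfold support, gamma.
  rewrite (frame_decomp r f xi Hdet rel_pos u v Hd); apply conormal_dot_comb, Hd.
Qed.

Lemma support_u : eq_on_disc r (du support) (fun u v => - (alpha u v * rho u v)).
Proof.
  intros u v Hd; transitivity (du gamma u v); [|apply frame_system_u, Hd].
  exact (partial_ext r true _ _ support_eq_gamma u v Hd).
Qed.

Lemma support_v : eq_on_disc r (dv support) (fun u v => - (beta u v * rho u v)).
Proof.
  intros u v Hd; transitivity (dv gamma u v); [|apply frame_system_v, Hd].
  exact (partial_ext r false _ _ support_eq_gamma u v Hd).
Qed.

Lemma support_uu_minus_vv :
  eq_on_disc r (fun u v => du (du support) u v - dv (dv support) u v)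
    (fun u v => - (gamma u v * rho u v) * (b11 u v - b22 u v)
                + alpha u v * (G1_11 u v * rho u v - du rho u v - G2_12 u v * rho u v)
                + beta u v * (G1_12 u v * rho u v - G2_22 u v * rho u v + dv rho u v)).
Proof.
  intros u v Hd; destruct smooth_frame_coords as (Sa & Sb & _).
  pose proof (partial_neg_mult r true _ _ _ u v Sa smooth_rho support_u Hd) as Euu.
  pose proof (partial_neg_mult r false _ _ _ u v Sb smooth_rho support_v Hd) as Evv.
  destruct (frame_system_u u v Hd) as (Eau & _ & _), (frame_system_v u v Hd) as (_ & Ebv & _).
  cbn [partial] in Euu, Evv; rewrite Euu, Evv, Eau, Ebv; ring.
Qed.

Lemma support_uv :
  eq_on_disc r (fun u v => 2 * dv (du support) u v)
    (fun u v => - (gamma u v * rho u v) * (2 * b12 u v)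
                + alpha u v * (2 * G1_12 u v * rho u v - 2 * dv rho u v)
                + beta u v * (2 * G1_22 u v * rho u v)).
Proof.
  intros u v Hd; destruct smooth_frame_coords as (Sa & _ & _).
  pose proof (partial_neg_mult r false _ _ _ u v Sa smooth_rho support_u Hd) as Euv.
  destruct (frame_system_v u v Hd) as (Eav & _ & _).
  cbn [partial] in Euv; rewrite Euv, Eav; ring.
Qed.

Lemma frame_coords_flat_chart k : b11 0 0 <> 0 ->
  flat_to k (fun u v => b11 u v - b22 u v) -> flat_to k b12 ->
  flat_to (S k) alpha /\ flat_to (S k) beta.
Proof.
  intros Hl0 FB Fb12.
  destruct smooth_frame_coords as (Sa & Sb & Sg).
  destruct smooth_christoffel as (S111 & S211 & S112 & S212 & S122 & S222).
  destruct frame_coords_origin as (A0 & B0 & G0).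
  apply (frame_coords_flat r k (- / b11 0 0) alpha beta gamma rho b11 b12 b22
           G1_11 G2_11 G1_12 G2_12 G1_22 G2_22);
    auto using smooth_rho, smooth_b11, smooth_b12, smooth_b22;
    try (intros u v Hd; destruct (frame_system_u u v Hd) as (? & ? & ?),
                                 (frame_system_v u v Hd) as (? & ? & ?); assumption).
  field; exact Hl0.
Qed.

Lemma support_jets k w :
  flat_to k (fun u v => b11 u v - b22 u v) -> flat_to k (fun u v => 2 * b12 u v) ->
  flat_to (S k) alpha -> flat_to (S k) beta -> (length w <= k)%nat ->
  dword w (fun u v => du (du support) u v - dv (dv support) u v) 0 0
    = rho 0 0 / b11 0 0 * dword w (fun u v => b11 u v - b22 u v) 0 0 /\
  dword w (fun u v => 2 * dv (du support) u v) 0 0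
    = rho 0 0 / b11 0 0 * dword w (fun u v => 2 * b12 u v) 0 0.
Proof.
  intros FB1 FB2 Fa Fb Hw.
  destruct smooth_frame_coords as (Sa & Sb & Sg).
  destruct smooth_christoffel as (S111 & S211 & S112 & S212 & S122 & S222).
  pose proof smooth_rho as Srho.
  pose proof smooth_b11 as Sb11; pose proof smooth_b12 as Sb12; pose proof smooth_b22 as Sb22.
  pose proof (smooth_on_partial r true _ Srho) as Srho_u.
  pose proof (smooth_on_partial r false _ Srho) as Srho_v.
  assert (Hc : - (gamma 0 0 * rho 0 0) = rho 0 0 / b11 0 0)
    by (rewrite (proj2 (proj2 frame_coords_origin)); unfold Rdiv; ring).
  rewrite (dword_ext r w _ _ support_uu_minus_vv 0 0 D0),
    (dword_ext r w _ _ support_uv 0 0 D0), <- Hc.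
  split; apply (dword_flat_combination r k (fun u v => - (gamma u v * rho u v)));
    smooth_tac.
Qed.

End EquiaffineChart.

Theorem proposition4p4
  (r : R) (f xi nu : vfun) (rho b11 b12 b21 b22 : sfun) (k : nat) :
  0 < r ->
  (* f and xi smooth on the coordinate coord_disc *)
  vsmooth_on r f -> vsmooth_on r xi ->
  (* f is an immersion and xi is transversal *)
  (forall u v, coord_disc r u v -> det3 (vdu f u v) (vdv f u v) (xi u v) <> 0) ->
  (* h positive definite, isothermal coordinates:
     h(d_u,d_u) = h(d_v,d_v) = rho > 0, h(d_u,d_v) = 0,
     h being the xi-component of D_X f_* Y *)
  (forall u v, coord_disc r u v -> 0 < rho u v) ->
  (forall u v, coord_disc r u v -> exists a c : R,
     vdu (vdu f) u v = vadd (vadd (vscal a (vdu f u v)) (vscal c (vdv f u v)))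
                            (vscal (rho u v) (xi u v))) ->
  (forall u v, coord_disc r u v -> exists a c : R,
     vdv (vdv f) u v = vadd (vadd (vscal a (vdu f u v)) (vscal c (vdv f u v)))
                            (vscal (rho u v) (xi u v))) ->
  (forall u v, coord_disc r u v -> exists a c : R,
     vdv (vdu f) u v = vadd (vadd (vscal a (vdu f u v)) (vscal c (vdv f u v)))
                            (vscal 0 (xi u v))) ->
  (* equiaffine (tau = 0) with shape operator matrix (b_ij) *)
  (forall u v, coord_disc r u v ->
     vdu xi u v = vadd (vscal (- b11 u v) (vdu f u v)) (vscal (- b21 u v) (vdv f u v))) ->
  (forall u v, coord_disc r u v ->
     vdv xi u v = vadd (vscal (- b12 u v) (vdu f u v)) (vscal (- b22 u v) (vdv f u v))) ->
  (forall u v, coord_disc r u v -> b12 u v = b21 u v) ->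
  (* (0,0) is an umbilical point *)
  b11 0 0 = b22 0 0 -> b12 0 0 = 0 ->
  (* of order >= k: the (k-1)-jet of B = (b11 - b22, 2 b12) vanishes *)
  jet_vanishes_below k (fun u v => b11 u v - b22 u v) (fun u v => 2 * b12 u v) ->
  (* lambda_0 = b11(0,0) = b22(0,0) <> 0 *)
  b11 0 0 <> 0 ->
  (* nu is the co-normal *)
  (forall u v, coord_disc r u v ->
     dot (nu u v) (vdu f u v) = 0 /\ dot (nu u v) (vdv f u v) = 0 /\
     dot (nu u v) (xi u v) = 1) ->
  let lambda0 := b11 0 0 in
  let q0 := vadd (f 0 0) (vscal (/ lambda0) (xi 0 0)) in
  let p : sfun := fun u v => dot (nu u v) (vadd (f u v) (vscal (-1) q0)) in
  let delta0 := det3 (vdu f 0 0) (vdv f 0 0) (xi 0 0)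
                 * det3 (nu 0 0) (vdu nu 0 0) (vdv nu 0 0) / rho 0 0 in
  jet_eq_scaled k
    (fun u v => du (du p) u v - dv (dv p) u v) (fun u v => 2 * dv (du p) u v)
    (/ lambda0 * delta0)
    (fun u v => b11 u v - b22 u v) (fun u v => 2 * b12 u v).
Proof.
  (* Umbilicity is the order-0 part of [Hjet] when k >= 1 and is not needed when k = 0. *)
  intros Hr Hf Hxi Hdet Hrho Huu Hvv Huv Hxu Hxv Hb _ _ Hjet Hl0 Hnu lambda0 q0 p delta0.
  assert (C : equiaffine_chart r f xi nu rho b11 b12 b21 b22) by now constructor.
  assert (SB1 : smooth_on r (fun u v => b11 u v - b22 u v))
    by exact (smooth_on_minus r _ _ (smooth_b11 C) (smooth_b22 C)).
  assert (SB2 : smooth_on r (fun u v => 2 * b12 u v))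
    by exact (smooth_on_mult r _ _ (smooth_on_const r 2) (smooth_b12 C)).
  destruct (jet_vanishes_below_flat r k _ _ Hr SB1 SB2 Hjet) as [FB1 FB2].
  assert (Fb12 : flat_to k b12).
  { intros w Hw; pose proof (FB2 w Hw) as H; rewrite dword_scal in H; lra. }
  destruct (frame_coords_flat_chart C k Hl0 FB1 Fb12) as [Fa Fb].
  assert (Hc : / lambda0 * delta0 = rho 0 0 / b11 0 0).
  { assert (E : delta0 = rho 0 0) by exact (delta0_eq C).
    rewrite E; unfold lambda0, Rdiv; ring. }
  intros i j Hij; rewrite !Dpart_dword, Hc.
  apply (support_jets C k); auto.
  rewrite length_app, !repeat_length; lia.
Qed.
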